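(* Let $|q|<1$, let $x,y$ be complex numbers and let $n,m\ge 0$ be integers. Then $$\sum_{k=0}^{\min\{n,m\}}{n\brack k}{m\brack k}(q;q)_k\,x^k\,h_{n+m-2k}(x|q)=\left(\sum_{k=0}^n{n\brack k}y^k\,h_{n-k}(x,y|q)\right)\left(\sum_{j=0}^m{m\brack j}y^j\,h_{m-j}(x,y|q)\right).$$
   Context: Throughout $|q|<1$. $(a;q)_n=\prod_{j=0}^{n-1}(1-aq^j)$, ${n\brack k}=\frac{(q;q)_n}{(q;q)_k(q;q)_{n-k}}$. The Rogers–Szegő polynomials are $h_n(x|q)=\sum_{k=0}^n{n\brack k}x^k$. $P_n(x,y)=(x-y)(x-qy)\cdots(x-q^{n-1}y)$ with $P_0=1$, and the bivariate Rogers–Szegő polynomials are $h_n(x,y|q)=\sum_{k=0}^n{n\brack k}P_k(x,y)$. *)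

From mathcomp Require Import all_boot all_order all_algebra.
From mathcomp Require Import complex.
From mathcomp Require Import reals.
Set Implicit Arguments. Unset Strict Implicit. Unset Printing Implicit Defensive.
Import Order.TTheory GRing.Theory Num.Theory.
Local Open Scope ring_scope.

Definition qpoch {F : fieldType} (a q : F) (n : nat) : F :=
  \prod_(j < n) (1 - a * q ^+ j).

(* Gaussian binomial [n k] = (q;q)_n / ((q;q)_k (q;q)_{n-k}), used for k <= n *)
Definition qbinom {F : fieldType} (q : F) (n k : nat) : F :=
  qpoch q q n / (qpoch q q k * qpoch q q (n - k)).

Definition RS {F : fieldType} (q x : F) (n : nat) : F :=
  \sum_(k < n.+1) qbinom q n k * x ^+ k.

Definition Pn {F : fieldType} (q x y : F) (n : nat) : F :=
  \prod_(j < n) (x - q ^+ j * y).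

Definition RS2 {F : fieldType} (q x y : F) (n : nat) : F :=
  \sum_(k < n.+1) qbinom q n k * Pn q x y k.

(* Rogers' formula h_n h_m = sum_k [n k][m k] (q;q)_k x^k h_(n+m-2k) follows by
   induction on n from the three-term recurrence
   h_(n+1) = (1 + x) h_n - x (1 - q^n) h_(n-1), which the right-hand side also
   satisfies thanks to a q-Pascal identity between its coefficients. Each factor
   of the bivariate side is h_n(x): the q-binomial theorem in the basis
   P_j(x,y), x^k = sum_j [k j] P_j(x,y) y^(k-j), gives
   h_n(x) = sum_j [n j] P_j(x,y) h_(n-j)(y), and exchanging the two summations
   with [n k][n-k j] = [n j][n-j k] turns this into sum_k [n k] y^k h_(n-k)(x,y).
   The hypothesis |q| < 1 only serves to make q a non-root of unity, so that
   no q-factorial vanishes. *)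

From mathcomp Require Import all_boot all_order all_algebra.
From mathcomp Require Import complex.
From mathcomp Require Import reals.
From mathcomp Require Import ring zify.
Set Implicit Arguments. Unset Strict Implicit. Unset Printing Implicit Defensive.
Import Order.TTheory GRing.Theory Num.Theory.
Local Open Scope ring_scope.

Lemma big_ord_widen0 (V : nmodType) n N (f : nat -> V) :
  (n <= N)%N -> (forall i, (n <= i < N)%N -> f i = 0) ->
  \sum_(i < n) f i = \sum_(i < N) f i.
Proof.
move=> le_nN f0; rewrite (big_ord_widen N f le_nN) big_mkcond.
apply: eq_bigr => i _; case: ifPn => // /negbTE ge_in.
by rewrite f0 // ltn_ord leqNgt ge_in.
Qed.

Lemma big_ord_shift0 (V : nmodType) j N (f : nat -> V) :
  (j <= N)%N -> (forall i, (i < j)%N -> f i = 0) ->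
  \sum_(i < N) f i = \sum_(i < N - j) f (j + i)%N.
Proof.
move=> le_jN f0; rewrite -(big_mkord xpredT f) (big_cat_nat _ (n := j)) //=.
rewrite big_nat_cond big1 => [|i /andP[/andP[_ /f0 //]]].
rewrite add0r -{1}[j]add0n big_addn big_mkord.
by apply: eq_bigr => i _; rewrite addnC.
Qed.

Section GaussianBinomials.

Variables (F : fieldType) (q : F).
Hypothesis q_nonroot : forall j, 1 - q ^+ j.+1 != 0.

Local Notation qfact := (qpoch q q).

Lemma qfact0 : qfact 0 = 1.
Proof. by rewrite /qpoch big_ord0. Qed.

Lemma qfactS n : qfact n.+1 = qfact n * (1 - q ^+ n.+1).
Proof. by rewrite /qpoch big_ord_recr /= exprS. Qed.

Lemma qfact_neq0 n : qfact n != 0.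
Proof. by elim: n => [|n IHn]; rewrite ?qfact0 ?oner_neq0 // qfactS mulf_neq0. Qed.

(* [qbinom q n k] is junk for [k > n] (truncated subtraction); [qbin] extends it
   by zero, so that sums over [k] can be widened freely. *)
Definition qbin n k := if (k <= n)%N then qbinom q n k else 0.

Lemma qbinom_qbin n k : (k <= n)%N -> qbinom q n k = qbin n k.
Proof. by rewrite /qbin => ->. Qed.

Lemma qbin_small n k : (n < k)%N -> qbin n k = 0.
Proof. by rewrite /qbin ltnNge => /negbTE ->. Qed.

Lemma qbin_addn k d : qbin (k + d) k = qfact (k + d) / (qfact k * qfact d).
Proof. by rewrite /qbin leq_addr /qbinom addKn. Qed.

Lemma qbin0 n : qbin n 0 = 1.
Proof. by rewrite -[n]add0n qbin_addn qfact0 mul1r divff ?qfact_neq0. Qed.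

Lemma qbinn n : qbin n n = 1.
Proof. by rewrite -[X in qbin X]addn0 qbin_addn qfact0 mulr1 addn0 divff ?qfact_neq0. Qed.

Lemma qbin_addC j k : qbin (j + k) j = qbin (j + k) k.
Proof. by rewrite qbin_addn [in RHS]addnC qbin_addn addnC (mulrC (qfact j)). Qed.

Lemma qbinS n k : qbin n.+1 k.+1 = qbin n k + q ^+ k.+1 * qbin n k.+1.
Proof.
case: (ltngtP k n) => [lt_kn|lt_nk|->]; last 2 first.
- by rewrite !qbin_small ?mulr0 ?addr0 // ltnS ltnW.
- by rewrite !qbinn qbin_small ?mulr0 ?addr0.
have [d ->] : exists d, n = (k.+1 + d)%N by exists (n - k.+1)%N; lia.
rewrite -addnS qbin_addn (addSnnS k d) qbin_addn -(addSnnS k d) qbin_addn.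
rewrite (addnS k.+1 d) qfactS -(addnS k.+1 d) exprD (qfactS k) (qfactS d).
by field; rewrite ?qfact_neq0 ?q_nonroot.
Qed.

Lemma qbinS_rev n k : qbin n.+1 k.+1 = q ^+ (n - k) * qbin n k + qbin n k.+1.
Proof.
case: (ltngtP k n) => [lt_kn|lt_nk|->]; last 2 first.
- by rewrite !qbin_small ?mulr0 ?addr0 // ltnS ltnW.
- by rewrite !qbinn qbin_small ?subnn ?mul1r ?addr0.
have [d ->] : exists d, n = (k.+1 + d)%N by exists (n - k.+1)%N; lia.
have -> : (k.+1 + d - k = d.+1)%N by lia.
rewrite -addnS qbin_addn (addSnnS k d) qbin_addn -(addSnnS k d) qbin_addn.
rewrite (addnS k.+1 d) qfactS -(addnS k.+1 d) exprD (qfactS k) (qfactS d).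
by field; rewrite ?qfact_neq0 ?q_nonroot.
Qed.

Lemma mul_qbinS_qfact n k :
  qbin n k.+1 * qfact k.+1 = qbin n k * qfact k * (1 - q ^+ (n - k)).
Proof.
case: (ltngtP k n) => [lt_kn|lt_nk|->]; last 2 first.
- by rewrite !qbin_small ?mul0r // ltnW.
- by rewrite qbin_small // subnn expr0 subrr mulr0 mul0r.
have [d ->] : exists d, n = (k.+1 + d)%N by exists (n - k.+1)%N; lia.
have -> : (k.+1 + d - k = d.+1)%N by lia.
rewrite qbin_addn (addSnnS k d) qbin_addn (qfactS k) (qfactS d).
by field; rewrite ?qfact_neq0 ?q_nonroot.
Qed.

Lemma qbin_predn n k : (1 - q ^+ n) * qbin n.-1 k = (1 - q ^+ (n - k)) * qbin n k.
Proof.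
case: n => [|n] /=; first by rewrite sub0n expr0 subrr !mul0r.
case: (ltngtP k n.+1) => [lt_kn|lt_nk|->]; last 2 first.
- by rewrite !qbin_small ?mulr0 // ltnW.
- by rewrite qbin_small // subnn expr0 subrr mulr0 mul0r.
have [d ->] : exists d, n = (k + d)%N by exists (n - k)%N; lia.
have -> : ((k + d).+1 - k = d.+1)%N by lia.
rewrite qbin_addn -addnS qbin_addn addnS qfactS -addnS exprD (qfactS d).
by field; rewrite ?qfact_neq0 ?q_nonroot.
Qed.

Lemma qbin_trinomial n j k :
  qbin n (j + k) * qbin (j + k) j = qbin n j * qbin (n - j) k.
Proof.
case: (leqP (j + k) n) => [le_jk_n|lt_n_jk]; last first.
  rewrite qbin_small // mul0r; case: (leqP j n) => [le_jn|lt_nj].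
    by rewrite [qbin (n - j) k]qbin_small ?mulr0 //; lia.
  by rewrite qbin_small ?mul0r.
have [d ->] : exists d, n = (j + k + d)%N by exists (n - (j + k))%N; lia.
rewrite qbin_addn qbin_addn -addnA qbin_addn addKn qbin_addn.
by field; rewrite ?qfact_neq0.
Qed.

Lemma qbin_exchange n k j : qbin n k * qbin (n - k) j = qbin n j * qbin (n - j) k.
Proof. by rewrite -!qbin_trinomial addnC qbin_addC. Qed.

Lemma RSE x n : RS q x n = \sum_(k < n.+1) qbin n k * x ^+ k.
Proof. by apply: eq_bigr => k _; rewrite qbinom_qbin // -ltnS. Qed.

Lemma RS_widen x n N :
  (n < N)%N -> RS q x n = \sum_(k < N) qbin n k * x ^+ k.
Proof.
move=> lt_nN; rewrite RSE.
apply: (big_ord_widen0 (f := fun k => qbin n k * x ^+ k)) => // k /andP[lt_nk _].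
by rewrite qbin_small ?mul0r.
Qed.

Lemma RS0 x : RS q x 0 = 1.
Proof. by rewrite (RS_widen x (ltnSn 0)) big_ord1 qbin0 mul1r. Qed.

Lemma RS_rec x n : (1 + x) * RS q x n = RS q x n.+1 + x * (1 - q ^+ n) * RS q x n.-1.
Proof.
rewrite mulrDl mul1r {1}(RS_widen x (ltnW (ltnSn n.+1))) RSE (RS_widen x (ltnSn n.+1)).
rewrite (@RS_widen x n.-1 n.+1); last by case: n.
rewrite big_ord_recl [in RHS]big_ord_recl !qbin0 !expr0 !mulr_sumr -!addrA.
congr (_ + _); rewrite -!big_split; apply: eq_bigr => k _.
have pascal : qbin n k.+1 + qbin n k = qbin n.+1 k.+1 + (1 - q ^+ n) * qbin n.-1 k.
  by rewrite qbinS_rev qbin_predn; ring.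
rewrite lift0 exprS /=.
by transitivity ((qbin n k.+1 + qbin n k) * (x * x ^+ k)); [ring | rewrite pascal; ring].
Qed.

Lemma RS2E x y n : RS2 q x y n = \sum_(j < n.+1) qbin n j * Pn q x y j.
Proof. by apply: eq_bigr => j _; rewrite qbinom_qbin // -ltnS. Qed.

Lemma Pn0 x y : Pn q x y 0 = 1.
Proof. by rewrite /Pn big_ord0. Qed.

Lemma PnS x y j : Pn q x y j.+1 = Pn q x y j * (x - q ^+ j * y).
Proof. by rewrite /Pn big_ord_recr. Qed.

Lemma expr_qbin_Pn x y k :
  x ^+ k = \sum_(j < k.+1) qbin k j * Pn q x y j * y ^+ (k - j).
Proof.
elim: k => [|k IHk]; first by rewrite big_ord1 qbin0 Pn0 expr0 !mulr1.
have shifted : \sum_(j < k.+1) q ^+ j * qbin k j * Pn q x y j * y ^+ (k.+1 - j)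
    = y ^+ k.+1 + \sum_(j < k.+1) q ^+ j.+1 * qbin k j.+1 * Pn q x y j.+1 * y ^+ (k - j).
  rewrite (big_ord_widen0 (N := k.+2)
    (f := fun j => q ^+ j * qbin k j * Pn q x y j * y ^+ (k.+1 - j))) //.
    by rewrite big_ord_recl qbin0 Pn0 expr0 subn0 !mul1r.
  by move=> j /andP[lt_kj _]; rewrite qbin_small ?mulr0 ?mul0r.
rewrite exprS IHk mulr_sumr [in RHS]big_ord_recl qbin0 Pn0 subn0 !mul1r.
transitivity (\sum_(j < k.+1) qbin k j * Pn q x y j.+1 * y ^+ (k - j)
    + \sum_(j < k.+1) q ^+ j * qbin k j * Pn q x y j * y ^+ (k.+1 - j)).
  rewrite -big_split; apply: eq_bigr => j _ /=.
  have le_jk : (j <= k)%N by rewrite -ltnS.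
  by rewrite subSn // exprS PnS; ring.
rewrite shifted addrCA -big_split; congr (_ + _); apply: eq_bigr => j _.
by rewrite lift0 subSS qbinS /=; ring.
Qed.

Lemma RS_expand_Pn x y n :
  RS q x n = \sum_(j < n.+1) qbin n j * Pn q x y j * RS q y (n - j).
Proof.
rewrite RSE.
transitivity (\sum_(k < n.+1) \sum_(j < n.+1)
    qbin n k * qbin k j * Pn q x y j * y ^+ (k - j)).
  apply: eq_bigr => k _; rewrite (expr_qbin_Pn x y) mulr_sumr.
  rewrite (big_ord_widen0 (N := n.+1)
    (f := fun j => qbin n k * (qbin k j * Pn q x y j * y ^+ (k - j)))) ?ltn_ord //.
    by apply: eq_bigr => j _; ring.
  by move=> j /andP[lt_kj _]; rewrite [qbin k j]qbin_small ?mul0r ?mulr0.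
rewrite exchange_big; apply: eq_bigr => j _ /=.
have le_jn : (j <= n)%N by rewrite -ltnS.
rewrite (RSE y) mulr_sumr (big_ord_shift0 (j := j)
  (f := fun k => qbin n k * qbin k j * Pn q x y j * y ^+ (k - j))) ?leqW //.
  by rewrite subSn //; apply: eq_bigr => i _; rewrite addKn qbin_trinomial; ring.
by move=> k lt_kj; rewrite [qbin k j]qbin_small ?mulr0 ?mul0r.
Qed.

Lemma sum_qbin_RS2 x y n :
  \sum_(k < n.+1) qbin n k * y ^+ k * RS2 q x y (n - k) = RS q x n.
Proof.
rewrite (RS_expand_Pn x y).
transitivity (\sum_(k < n.+1) \sum_(j < n.+1)
    qbin n k * qbin (n - k) j * y ^+ k * Pn q x y j).
  apply: eq_bigr => k _; rewrite RS2E mulr_sumr.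
  rewrite (big_ord_widen0 (N := n.+1)
    (f := fun j => qbin n k * y ^+ k * (qbin (n - k) j * Pn q x y j))).
  - by apply: eq_bigr => j _; ring.
  - by rewrite ltnS leq_subr.
  - by move=> j /andP[lt_j _]; rewrite [qbin (n - k) j]qbin_small ?mul0r ?mulr0.
rewrite exchange_big; apply: eq_bigr => j _ /=.
rewrite (RS_widen y (n := n - j) (N := n.+1)) ?ltnS ?leq_subr // mulr_sumr.
by apply: eq_bigr => k _; rewrite qbin_exchange; ring.
Qed.

Section RogersFormula.

Variables (x : F) (m : nat).

Let c n k := qbin n k * qbin m k * qfact k.
Let T n k := c n k * x ^+ k * RS q x (n + m - 2 * k).
Let S n := \sum_(k < n.+1) T n k.

Lemma rogers_coef_rec n k :
  c n.+1 k.+1 = c n k.+1 + c n k * (1 - q ^+ (n + m - 2 * k)) - (1 - q ^+ n) * c n.-1 k.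
Proof.
have -> : c n.+1 k.+1 = q ^+ (n - k) * qbin n k * (qbin m k.+1 * qfact k.+1) + c n k.+1.
  by rewrite /c qbinS_rev; ring.
have -> : (1 - q ^+ n) * c n.-1 k = (1 - q ^+ (n - k)) * qbin n k * qbin m k * qfact k.
  by rewrite /c !mulrA qbin_predn.
rewrite mul_qbinS_qfact /c.
case: (leqP k n) => [le_kn|lt_nk]; last by rewrite qbin_small //; ring.
case: (leqP k m) => [le_km|lt_mk]; last by rewrite [qbin m k]qbin_small //; ring.
have -> : (n + m - 2 * k = (n - k) + (m - k))%N by lia.
by rewrite exprD; ring.
Qed.

Lemma rogers_term_rec n k :
  T n.+1 k.+1 = c n k.+1 * x ^+ k.+1 * RS q x (n + m - 2 * k.+1).+1
    + c n k * x ^+ k.+1 * (1 - q ^+ (n + m - 2 * k)) * RS q x (n + m - 2 * k).-1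
    - x * (1 - q ^+ n) * T n.-1 k.
Proof.
(* Wherever its coefficient is nonzero, each [RS] below has index (n+m-2k)-1. *)
set G := RS q x (n + m - 2 * k).-1.
have -> : T n.+1 k.+1 = c n.+1 k.+1 * x ^+ k.+1 * G.
  by rewrite /T /G; congr (_ * RS q x _); lia.
have -> : c n k.+1 * x ^+ k.+1 * RS q x (n + m - 2 * k.+1).+1 = c n k.+1 * x ^+ k.+1 * G.
  rewrite /c; case: (leqP k.+1 n) => [le_kn|lt_nk]; last by rewrite qbin_small ?mul0r.
  case: (leqP k.+1 m) => [le_km|lt_mk]; last by rewrite [qbin m _]qbin_small ?mulr0 ?mul0r.
  by rewrite /G; congr (_ * RS q x _); lia.
have -> : x * (1 - q ^+ n) * T n.-1 k = x * (1 - q ^+ n) * c n.-1 k * x ^+ k * G.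
  have [n0|n_gt0] := posnP n; first by rewrite n0 expr0 subrr !(mulr0, mul0r).
  by rewrite /T /G !mulrA; congr (_ * RS q x _); lia.
by rewrite rogers_coef_rec [x ^+ k.+1]exprS; ring.
Qed.

Lemma rogers_sum_rec n : S n.+1 = (1 + x) * S n - x * (1 - q ^+ n) * S n.-1.
Proof.
pose A k := c n k * x ^+ k * RS q x (n + m - 2 * k).+1.
pose B k := c n k * x ^+ k.+1 * (1 - q ^+ (n + m - 2 * k)) * RS q x (n + m - 2 * k).-1.
have expand : (1 + x) * S n = \sum_(k < n.+1) A k + \sum_(k < n.+1) B k.
  rewrite /S mulr_sumr -big_split; apply: eq_bigr => k _ /=.
  transitivity (c n k * x ^+ k * ((1 + x) * RS q x (n + m - 2 * k))); first by rewrite /T; ring.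
  by rewrite RS_rec /A /B exprS; ring.
have first_term : T n.+1 0 = A 0%N.
  by rewrite /T /A /c !qbin0; congr (_ * RS q x _); lia.
have padA : \sum_(k < n.+2) A k = \sum_(k < n.+1) A k.
  have An : A n.+1 = 0 by rewrite /A /c qbin_small ?mul0r.
  by rewrite big_ord_recr /= An addr0.
have widenS : S n.-1 = \sum_(k < n.+1) T n.-1 k.
  apply: (big_ord_widen0 (f := T n.-1)) => [|k /andP[lt_k _]]; first by rewrite ltnS leq_pred.
  by rewrite /T /c qbin_small ?mul0r.
rewrite {1}/S big_ord_recl first_term expand widenS mulr_sumr.
have -> : \sum_(k < n.+1) T n.+1 (lift ord0 k)
    = \sum_(k < n.+1) A k.+1 + \sum_(k < n.+1) B k
      - \sum_(k < n.+1) x * (1 - q ^+ n) * T n.-1 k.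
  by rewrite -big_split -sumrB; apply: eq_bigr => k _; rewrite lift0 rogers_term_rec.
by rewrite -padA [in RHS]big_ord_recl !addrA.
Qed.

Lemma rogers_formula n :
  RS q x n * RS q x m
  = \sum_(k < n.+1) qbin n k * qbin m k * qfact k * x ^+ k * RS q x (n + m - 2 * k).
Proof.
change (RS q x n * RS q x m = S n).
elim/ltn_ind: n => -[_|n IHn].
  by rewrite RS0 mul1r /S big_ord1 /T /c /= !qbin0 qfact0 expr0 !mul1r subn0.
have rec : RS q x n.+1 = (1 + x) * RS q x n - x * (1 - q ^+ n) * RS q x n.-1.
  by rewrite RS_rec addrK.
by rewrite rogers_sum_rec -IHn // -IHn ?ltnS ?leq_pred // rec; ring.
Qed.

End RogersFormula.

Lemma rogers_bivariate x y n m :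
  \sum_(k < (minn n m).+1)
     qbinom q n k * qbinom q m k * qfact k * x ^+ k * RS q x (n + m - 2 * k)
  = (\sum_(k < n.+1) qbinom q n k * y ^+ k * RS2 q x y (n - k))
    * (\sum_(j < m.+1) qbinom q m j * y ^+ j * RS2 q x y (m - j)).
Proof.
have RS2_sum N : \sum_(k < N.+1) qbinom q N k * y ^+ k * RS2 q x y (N - k) = RS q x N.
  by rewrite -(sum_qbin_RS2 x y); apply: eq_bigr => k _; rewrite qbinom_qbin // -ltnS.
rewrite !RS2_sum rogers_formula.
transitivity (\sum_(k < (minn n m).+1)
    qbin n k * qbin m k * qfact k * x ^+ k * RS q x (n + m - 2 * k)).
  apply: eq_bigr => k _; have := ltn_ord k.
  by rewrite ltnS leq_min => /andP[le_kn le_km]; rewrite !qbinom_qbin.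
apply: (big_ord_widen0 (f := fun k =>
  qbin n k * qbin m k * qfact k * x ^+ k * RS q x (n + m - 2 * k))).
  by rewrite ltnS geq_minl.
by move=> k /andP[lt_mk lt_kn]; rewrite [qbin m k]qbin_small ?mulr0 ?mul0r //; lia.
Qed.

End GaussianBinomials.

Lemma norm_lt1_oneBX_neq0 (C : numDomainType) (q : C) :
  `|q| < 1 -> forall j, 1 - q ^+ j.+1 != 0.
Proof.
move=> q_lt1 j; have : `|q ^+ j.+1| < 1 by rewrite normrX exprn_ilt1.
by apply: contraTneq => /eqP; rewrite subr_eq0 => /eqP <-; rewrite normr1 ltxx.
Qed.

Local Open Scope complex_scope.

Theorem corollary3p5 (R : realType) (q x y : R[i]) (n m : nat) :
  `|q| < 1 ->
  \sum_(k < (minn n m).+1)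
     qbinom q n k * qbinom q m k * qpoch q q k * x ^+ k * RS q x (n + m - 2 * k)%N
  = (\sum_(k < n.+1) qbinom q n k * y ^+ k * RS2 q x y (n - k))
    * (\sum_(j < m.+1) qbinom q m j * y ^+ j * RS2 q x y (m - j)).
Proof. by move=> q_lt1; apply/rogers_bivariate/norm_lt1_oneBX_neq0. Qed.
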